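(* In the theory $\mathfrak{T}$, the following holds for every formula $\Phi(\alpha,\beta)$ (possibly with parameters). For every nonempty set $X$, if for every $\alpha\in X$ there is exactly one $\beta$ with $\Phi(\alpha,\beta)$, then there exist a function $F_X$ on $X$ and a set $Y$ such that $F_X:X\twoheadrightarrow Y$ and, for every $\eta\in X$, $F_X:\eta\mapsto \iota\xi\,\Phi(\eta,\xi)$. Here $\iota\xi\,\Phi(\eta,\xi)$ denotes the unique $\xi$ with $\Phi(\eta,\xi)$.
   Context: The theory $\mathfrak{T}$ is set up as follows. The universe consists of ''things'', each of which is either a set or a function on a set. Variables $\alpha,\beta,\gamma,\eta,\xi,\zeta,\dots$ range over all things and $X,Y,Z,\dots$ range over sets. For a set $X$, the symbols $f_X,g_X,F_X,\dots$ range over functions on $X$. The primitive predicates are $\alpha\in\beta$, $\alpha=\beta$, the ternary predicate $f:Y\twoheadrightarrow Z$ (read ''$f$ has domain $Y$ and codomain $Z$'') and the ternary predicate $f:\alpha\mapsto\beta$ (read ''$f$ maps $\alpha$ to $\beta$''). Notation: $\alpha^+$ is the singleton $\{\alpha\}$ and $\langle\alpha,\beta\rangle:=\{\alpha,\{\alpha,\beta\}\}$. An ur-function is a function on a singleton $\alpha^+$. For a function $f$ and an argument $\alpha$ with a unique $\beta$ such that $f:\alpha\mapsto\beta$, this $\beta$ is written $f(\alpha)$. Axioms of $\mathfrak{T}$: - Extensionality for sets. - No function on a set is a set. - A set has no domain or codomain and maps nothing to anything. - There is an empty set $\emptyset$. - Pairing: for all $\alpha,\beta$ the set $\{\alpha,\beta\}$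 exists. - Union (sum set). - Power set. - Infinity: $\omega$ is the set of finite Zermelo ordinals, where $0=\emptyset$ and $n+1=n^+$. - Regularity. - A function on a set has no elements. - (GEN-F) For nonempty $X$, every $f_X$ satisfies $f_X:Y\twoheadrightarrow Z$ for some sets $Y,Z$, and for each $\alpha\in Y$ there is a unique $\beta$ with $f_X:\alpha\mapsto\beta$. - $f_X$ has no domain other than $X$. - $f_X:\alpha\mapsto\beta$ implies $\alpha\in X$. - For nonempty $X$, if $f_X:X\twoheadrightarrow\beta$ then $\beta$ is the image set $f_X[X]=\{\gamma:\exists\eta\in X\,(f_X:\eta\mapsto\gamma)\}$. - (INV) For nonempty $X$ with $f_X:X\twoheadrightarrow Y$, for every $\beta$ the set $\{\alpha\in X: f_X:\alpha\mapsto\beta\}$ exists. - (EXT-F) $f_X=g_Y$ iff $X=Y$ and, for all $\alpha,\beta$, $f_X:\alpha\mapsto\beta \iff g_Y:\alpha\mapsto\beta$. - There is an inactive function $1_\emptyset$ with $1_\emptyset:\emptyset\twoheadrightarrow\emptyset$ that maps nothing. - (UFA) For all $\alpha,\beta$ there is an ur-function $f_{\alpha^+}$ with $f_{\alpha^+}:\alpha^+\twoheadrightarrow\beta^+$ and $f_{\alpha^+}:\alpha\mapsto\beta$. - (REG-F) If $f_X:X\twoheadrightarrow Y$, then for every $\alpha$, neither $f_X:f_X\mapsto\alpha$ nor $f_X:\alpha\mapsto f_X$. - (SUM-F, nonstandard, with a multiple quantifier over families) For every nonempty set $X$ and every family $(f_{\alpha^+})_{\alpha\in X}$ that assigns to each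 $\alpha\in X$ an ur-function $f_{\alpha^+}$ on $\alpha^+$, there exist a function $F_X$ and a set $Y$ with $F_X:X\twoheadrightarrow Y$ and $F_X:\alpha\mapsto f_{\alpha^+}(\alpha)$ for every $\alpha\in X$. *)

From Stdlib Require Import Classical.

Section Sig.
Variable U : Type.
Variable isSet : U -> Prop.
Variable funOn : U -> U -> Prop.
Variable mem : U -> U -> Prop.
Variable dd : U -> U -> U -> Prop.     (* dd f Y Z : f : Y ->> Z *)
Variable mp : U -> U -> U -> Prop.     (* mp f a b : f : a |-> b *)

Definition isEmpty (e : U) := isSet e /\ forall a, ~ mem a e.
Definition nonempty (X : U) := exists a, mem a X.
Definition isSingleton (s a : U) := isSet s /\ forall c, mem c s <-> c = a.
Definition value (f a b : U) := forall c, mp f a c <-> c = b.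
End Sig.

Record TModel := {
  U : Type;
  isSet : U -> Prop;
  funOn : U -> U -> Prop;
  mem : U -> U -> Prop;
  dd : U -> U -> U -> Prop;
  mp : U -> U -> U -> Prop;
  ax_things : forall a, isSet a \/ exists X, funOn a X;
  ax_funOn_set : forall f X, funOn f X -> isSet X;
  ax_ext : forall X Y, isSet X -> isSet Y -> (forall a, mem a X <-> mem a Y) -> X = Y;
  ax_fun_not_set : forall f X, funOn f X -> ~ isSet f;
  ax_set_no_dd : forall X Y Z, isSet X -> ~ dd X Y Z;
  ax_set_no_mp : forall X a b, isSet X -> ~ mp X a b;
  ax_empty : exists E, isEmpty U isSet mem E;
  ax_pair : forall a b, exists P, isSet P /\ forall c, mem c P <-> c = a \/ c = b;
  ax_union : forall X, isSet X ->
      exists S, isSet S /\ forall c, mem c S <-> exists Y, mem Y X /\ mem c Y;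
  ax_power : forall X, isSet X ->
      exists P, isSet P /\ forall c, mem c P <-> isSet c /\ forall d, mem d c -> mem d X;
  (* infinity: omega is the set of finite Zermelo ordinals (0 = empty, n+1 = {n}) *)
  ax_infinity : exists W, isSet W
      /\ (forall e, isEmpty U isSet mem e -> mem e W)
      /\ (forall n s, mem n W -> isSingleton U isSet mem s n -> mem s W)
      /\ (forall S, isSet S ->
            (forall e, isEmpty U isSet mem e -> mem e S) ->
            (forall n s, mem n S -> isSingleton U isSet mem s n -> mem s S) ->
            forall n, mem n W -> mem n S);
  ax_reg : forall X, isSet X -> nonempty U mem X ->
      exists y, mem y X /\ forall z, mem z y -> ~ mem z X;
  ax_fun_no_elems : forall f X a, funOn f X -> ~ mem a f;
  ax_genF : forall f X, funOn f X -> nonempty U mem X ->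
      exists Y Z, isSet Y /\ isSet Z /\ dd f Y Z /\
        forall a, mem a Y -> exists! b, mp f a b;
  ax_dom_unique : forall f X Y Z, funOn f X -> dd f Y Z -> Y = X;
  ax_mp_dom : forall f X a b, funOn f X -> mp f a b -> mem a X;
  ax_codom_image : forall f X b, funOn f X -> nonempty U mem X -> dd f X b ->
      isSet b /\ forall c, mem c b <-> exists e, mem e X /\ mp f e c;
  ax_inv : forall f X Y, funOn f X -> nonempty U mem X -> isSet Y -> dd f X Y ->
      forall b, exists S, isSet S /\ forall a, mem a S <-> mem a X /\ mp f a b;
  ax_extF : forall f X g Y, funOn f X -> funOn g Y ->
      (f = g <-> X = Y /\ forall a b, mp f a b <-> mp g a b);
  ax_inactive : exists i E, isEmpty U isSet mem E /\ funOn i E /\ dd i E E /\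
      forall a b, ~ mp i a b;
  ax_UFA : forall a b s t, isSingleton U isSet mem s a -> isSingleton U isSet mem t b ->
      exists f, funOn f s /\ dd f s t /\ mp f a b;
  ax_regF : forall f X Y, funOn f X -> isSet Y -> dd f X Y ->
      forall a, ~ mp f f a /\ ~ mp f a f;
  (* SUM-F (multiple quantifier over families) *)
  ax_sumF : forall X (fam : U -> U), isSet X -> nonempty U mem X ->
      (forall a, mem a X -> exists s, isSingleton U isSet mem s a /\ funOn (fam a) s) ->
      exists F Y, funOn F X /\ isSet Y /\ dd F X Y /\
        forall a, mem a X -> exists b, value U mp (fam a) a b /\ mp F a b
}.

From Stdlib Require Import Classical ClassicalEpsilon.

(* Definable choice reduces to SUM-F: by UFA each [a] in [X] carries an
   ur-function [a^+ ->> (iota xi. Phi a xi)^+] mapping [a] to the unique witness;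
   choosing one for every [a] gives a family to which SUM-F applies, and the
   function it produces sends [a] to the value of that ur-function at [a]. *)

Section DefinableChoice.

Variable M : TModel.

Notation singleton := (isSingleton (U M) (isSet M) (mem M)).

Lemma singleton_exists (a : U M) : exists s, singleton s a.
Proof.
  destruct (ax_pair M a a) as [P [HP HPmem]].
  exists P; split; [exact HP|].
  intro c; rewrite HPmem; tauto.
Qed.

Lemma ur_function_exists (a b : U M) :
  exists s f, singleton s a /\ funOn M f s /\ mp M f a b.
Proof.
  destruct (singleton_exists a) as [s Hs], (singleton_exists b) as [t Ht].
  destruct (ax_UFA M a b s t Hs Ht) as [f [Hf [_ Hab]]].
  exists s, f; auto.
Qed.

Lemma ur_function_family_exists (X : U M) (Phi : U M -> U M -> Prop) :
  (forall a, mem M a X -> exists b, Phi a b) ->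
  exists fam : U M -> U M, forall a, mem M a X ->
    exists s b, singleton s a /\ funOn M (fam a) s /\ Phi a b /\ mp M (fam a) a b.
Proof.
  intro Htotal.
  apply (choice (fun a f => mem M a X ->
    exists s b, singleton s a /\ funOn M f s /\ Phi a b /\ mp M f a b)).
  intro a; destruct (classic (mem M a X)) as [Ha | Ha].
  - destruct (Htotal a Ha) as [b Hb].
    destruct (ur_function_exists a b) as [s [f [Hs [Hf Hab]]]].
    exists f; intros _; exists s, b; auto.
  - exists a; intro; contradiction.
Qed.

Lemma value_mp_eq (f a b c : U M) : value (U M) (mp M) f a b -> mp M f a c -> c = b.
Proof. intros Hval Hmp; exact (proj1 (Hval c) Hmp). Qed.

End DefinableChoice.

Theorem mainTheorem2 (M : TModel) (Phi : U M -> U M -> Prop) (X : U M) :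
  isSet M X -> nonempty (U M) (mem M) X ->
  (forall a, mem M a X -> exists! b, Phi a b) ->
  exists F Y, funOn M F X /\ isSet M Y /\ dd M F X Y /\
    forall eta, mem M eta X -> forall xi, Phi eta xi -> mp M F eta xi.
Proof.
  intros HX Hne Huniq.
  destruct (ur_function_family_exists M X Phi) as [fam Hfam].
  { intros a Ha; destruct (Huniq a Ha) as [b [Hb _]]; eauto. }
  destruct (ax_sumF M X fam HX Hne) as [F [Y [HF [HY [Hdd HFval]]]]].
  { intros a Ha; destruct (Hfam a Ha) as [s [b [Hs [Hf _]]]]; eauto. }
  exists F, Y; repeat split; auto.
  intros eta Heta xi Hxi.
  destruct (HFval eta Heta) as [c [Hval HFc]].
  destruct (Hfam eta Heta) as [s [b [_ [_ [Hb Hmp]]]]].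
  assert (Hbc : b = c) by exact (value_mp_eq M _ _ _ _ Hval Hmp).
  destruct (Huniq eta Heta) as [d [_ Hd]].
  assert (Hxib : xi = b) by (rewrite <- (Hd b Hb); symmetry; apply Hd; exact Hxi).
  congruence.
Qed.
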